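(* Let $Y$ be a variable. For all positive integers $n$, $$\det_{0\le i,j\le n-1}\left(Y+2^{-2\lceil(i+j)/2\rceil}\binom{2\lceil(i+j)/2\rceil}{\lceil(i+j)/2\rceil}\right)=2^{-n(n-1)}(Yn+1).$$ *)

From mathcomp Require Import all_boot all_algebra.
Set Implicit Arguments. Unset Strict Implicit. Unset Printing Implicit Defensive.
Import GRing.Theory.
Local Open Scope ring_scope.

Definition ceilhalf (m : nat) : nat := uphalf m.

Definition cbin (k : nat) : rat := ('C(k.*2, k))%:R / (2 ^+ k.*2).

(* Let f(i,k) be the number of walks of i steps +-1 on Z, starting at 0, that end at k or at -k-1
   (walks folded about -1/2); f(i,k) = C(i, ceil((i+k)/2)), and f(i,k) = 0 for k > i, f(i,i) = 1.
   The folding step is self-adjoint, so sum_k f(i,k) f(j,k) = f(i+j,0) = C(i+j, ceil((i+j)/2)),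
   and C(s, ceil(s/2)) / 2^s = 2^(-2c) C(2c, c) for c = ceil(s/2).  Hence the lower triangular
   matrix L = (f(i,k) / 2^i) satisfies L L^T = (2^(-2c) C(2c, c))_{ij} with c = ceil((i+j)/2), and
   its rows sum to 1.  The matrix of the theorem is then L (I + Y 1 1^T) L^T, whose determinant is
   det(L)^2 (1 + nY) = 2^(-n(n-1)) (nY + 1) by the matrix determinant lemma. *)

From mathcomp Require Import all_boot all_algebra.
From mathcomp Require Import zify ring.
Import GRing.Theory.

(* As [0.-1 = 0], the walk step reflects at the origin, i.e. it is folded about -1/2. *)
Definition fold_step (g : nat -> nat) (k : nat) : nat := g k.-1 + g k.+1.

Definition fwalk (s : nat) : nat -> nat := iter s fold_step (fun k => nat_of_bool (k == 0)).

Lemma sum_fold_step_adjoint (f g : nat -> nat) (m : nat) :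
  \sum_(k < m.+1) fold_step f k * g k + f m * g m.+1 =
  \sum_(k < m.+1) f k * fold_step g k + f m.+1 * g m.
Proof.
elim: m => [|m IH]; first by rewrite !big_ord1 /fold_step /=; lia.
rewrite big_ord_recr [in RHS]big_ord_recr /= /fold_step /=.
move: IH; rewrite /fold_step /=; lia.
Qed.

Lemma fwalkS s k : fwalk s.+1 k = fwalk s k.-1 + fwalk s k.+1.
Proof. by []. Qed.

Lemma fwalkE s k : fwalk s k = 'C(s, uphalf (s + k)).
Proof.
elim: s k => [|s IH] [|k] //; rewrite fwalkS !IH /=; last first.
  by rewrite binS addnC !addnS /= uphalfE.
rewrite addn0 addn1 /= binS addnC; congr (_ + _).
have half_sub : s - uphalf s = s./2.
  by have := odd_double_half s; rewrite uphalf_half -!muln2; lia.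
by rewrite -half_sub bin_sub // leq_uphalf_double -addnn leq_addr.
Qed.

Lemma fwalk_gt s k : s < k -> fwalk s k = 0.
Proof.
move=> lt_sk; rewrite fwalkE bin_small // uphalf_half.
by have := odd_double_half (s + k); rewrite -muln2; lia.
Qed.

Lemma fwalk_diag s : fwalk s s = 1.
Proof. by rewrite fwalkE addnn uphalf_double binn. Qed.

Lemma sum_fwalk_mul (g : nat -> nat) i m : i < m ->
  \sum_(k < m) fwalk i k * g k = iter i fold_step g 0.
Proof.
elim: i g m => [|i IH] g [|m] // lt_im.
  by rewrite big_ord_recl big1 ?addn0 ?mul1n // => k _; rewrite mul0n.
have adj := sum_fold_step_adjoint (fwalk i) g m.
rewrite !fwalk_gt ?mul0n ?addn0 in adj; [|lia..].
by rewrite iterSr -(IH _ m.+1) // ltnW.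
Qed.

Lemma sum_fwalk i m : i < m -> \sum_(k < m) fwalk i k = 2 ^ i.
Proof.
move=> lt_im; have iter_one : iter i fold_step (fun=> 1) = fun=> 2 ^ i.
  by elim: i {lt_im} => // i /= ->; rewrite /fold_step expnS mul2n addnn.
rewrite -[2 ^ i]/((fun=> 2 ^ i) 0) -iter_one -(sum_fwalk_mul _ _ _ lt_im).
by apply: eq_bigr => k _; rewrite muln1.
Qed.

Lemma sum_fwalk_mul_fwalk i j m : i < m ->
  \sum_(k < m) fwalk i k * fwalk j k = fwalk (i + j) 0.
Proof. by move=> lt_im; rewrite sum_fwalk_mul // /fwalk iterD. Qed.

Local Open Scope ring_scope.

Lemma cbin_uphalf s : cbin (uphalf s) = 'C(s, uphalf s)%:R / 2 ^+ s.
Proof.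
have := odd_double_half s; set t := s./2; case: (odd s) => <-; last first.
  by rewrite add0n uphalf_double.
rewrite add1n /= doubleK /cbin doubleS binS.
have -> : 'C(t.*2.+1, t) = 'C(t.*2.+1, t.+1).
  have sub_t : (t.*2.+1 - t = t.+1)%N by rewrite -addnn; lia.
  have le_t : (t <= t.*2.+1)%N by rewrite -addnn; lia.
  by rewrite -[LHS](bin_sub le_t) sub_t.
rewrite natrD !exprS; field; exact: expf_neq0.
Qed.

Lemma det1D_mulmx_tr (R : comNzRingType) n (u v : 'cV[R]_n) :
  \det (1%:M + u *m v^T) = 1 + (v^T *m u) 0 0.
Proof.
pose P1 := block_mx 1%:M 0 v^T 1%:M : 'M[R]_(n + 1).
pose P2 := block_mx (1%:M + u *m v^T) u 0 1%:M : 'M[R]_(n + 1).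
pose P3 := block_mx 1%:M 0 (- v^T) 1%:M : 'M[R]_(n + 1).
have E : P1 *m (P2 *m P3) = block_mx 1%:M u 0 (1%:M + v^T *m u).
  rewrite /P1 /P2 /P3 !mulmx_block !mulmx1 !mul1mx !mul0mx !mulmx0 !addr0 !add0r.
  by rewrite mulmxN addrK mulmx1 subrr addrC.
have := congr1 determinant E.
rewrite !det_mulmx det_lblock det_ublock !det_lblock det_ublock !det1 !mul1r mulr1.
by rewrite mulr1 => ->; rewrite det_mx11 !mxE eqxx mulr1n.
Qed.

Lemma det_gram_add_const (R : comNzRingType) n (A : 'M[R]_n) (x : R) :
  (forall i, \sum_j A i j = 1) ->
  \det (A *m A^T + const_mx x) = \det A ^+ 2 * (1 + x *+ n).
Proof.
move=> rowsum1.
have A_const c : A *m const_mx c = const_mx c :> 'cV_n.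
  apply/matrixP => i j; rewrite !mxE; under eq_bigr do rewrite mxE.
  by rewrite -mulr_suml rowsum1 mul1r.
pose u : 'cV_n := const_mx x; pose v : 'cV_n := const_mx (1 : R).
have -> : A *m A^T + const_mx x = A *m (1%:M + u *m v^T) *m A^T.
  rewrite mulmxDr mulmx1 mulmxDl !mulmxA A_const -mulmxA -trmx_mul A_const.
  by congr (_ + _); apply/matrixP => i j; rewrite !mxE big_ord1 !mxE mulr1.
rewrite !det_mulmx det_tr det1D_mulmx_tr !mxE.
under eq_bigr do rewrite !mxE mul1r.
by rewrite sumr_const card_ord mulrAC expr2.
Qed.

Lemma sqr_prodr_expr_ord (R : comPzSemiRingType) (x : R) n :
  (\prod_(i < n) x ^+ i) ^+ 2 = x ^+ (n * (n - 1)).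
Proof.
rewrite prodrXr -exprM -(big_mkord xpredT (fun i => i)) bin2_sum.
by rewrite mulnC -mul_bin_diag bin1 subn1.
Qed.

Definition fwalk_mx n : 'M[rat]_n := \matrix_(i, k) ((fwalk i k)%:R / 2 ^+ i).

Lemma fwalk_mx_rowsum n (i : 'I_n) : \sum_k fwalk_mx n i k = 1.
Proof.
under eq_bigr do rewrite mxE.
by rewrite -mulr_suml -natr_sum sum_fwalk // natrX divff // expf_neq0.
Qed.

Lemma fwalk_mx_gram n :
  fwalk_mx n *m (fwalk_mx n)^T = \matrix_(i, j) cbin (ceilhalf (i + j)).
Proof.
apply/matrixP => i j; rewrite !mxE; under eq_bigr do rewrite !mxE mulrACA -natrM.
rewrite -mulr_suml -natr_sum sum_fwalk_mul_fwalk // fwalkE addn0.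
by rewrite /ceilhalf cbin_uphalf exprD invfM.
Qed.

Lemma det_fwalk_mx n : \det (fwalk_mx n) = \prod_(i < n) 2^-1 ^+ i.
Proof.
rewrite det_trig; last by apply/is_trig_mxP => i k lt_ik; rewrite mxE fwalk_gt ?mul0r.
by apply: eq_bigr => i _; rewrite mxE fwalk_diag mul1r exprVn.
Qed.

Theorem mainTheorem9 (n : nat) : (0 < n)%N ->
  \det (\matrix_(i < n, j < n) ('X + (cbin (ceilhalf (i + j)))%:P) : 'M[{poly rat}]_n)
  = ((2 : rat) ^+ (n * (n - 1)))^-1 *: ('X *+ n + 1).
Proof.
move=> _; set A := map_mx polyC (fwalk_mx n).
have -> : \matrix_(i < n, j < n) ('X + (cbin (ceilhalf (i + j)))%:P) = A *m A^T + const_mx 'X.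
  by rewrite map_trmx -map_mxM fwalk_mx_gram; apply/matrixP => i j; rewrite !mxE addrC.
rewrite det_gram_add_const; last first.
  by move=> i; under eq_bigr do rewrite mxE; rewrite -rmorph_sum fwalk_mx_rowsum.
rewrite det_map_mx -rmorphXn det_fwalk_mx sqr_prodr_expr_ord exprVn.
by rewrite mul_polyC addrC.
Qed.
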